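(* Let $\mathcal R_1,\mathcal R_2\subseteq\mathbb{N}_0^n\times\mathbb{N}_0^n$ be reaction networks on the same set of $n$ species, both without catalytic species. Then $\mathrm{cl}(\mathcal R_1)=\mathrm{cl}(\mathcal R_2)$ if and only if $\mathcal R_1(x)=\mathcal R_2(x)$ for all $x\in\mathbb{N}_0^n$.
   Context: A reaction network (RN) is a (possibly infinite) subset $\mathcal R\subseteq\mathbb{N}_0^n\times\mathbb{N}_0^n$ containing no element $(y,y')$ with $y=y'$; elements $(y,y')$ are reactions $y\to y'$. A reaction $y\to y'$ has a catalytic species if there is $i$ with $y^i>0$ and $(y')^i>0$; an RN is without catalytic species if none of its reactions has a catalytic species. For $r_1=(y_1,y_1'),\ r_2=(y_2,y_2')$ define $r_1\oplus r_2=(y_1+0\vee(y_2-y_1'),\ y_2'+0\vee(y_1'-y_2))$ ($\vee$ componentwise maximum); it is associative. For $A\subseteq\mathbb{N}_0^n\times\mathbb{N}_0^n$, $\mathrm{cl}(A)$ is the set of all finite $\oplus$-sums of elements of $A$, including the empty sum $(0,0)$. An ordered sequence of reactions $y_1\to y_1',\dots,y_m\to y_m'$ is active on $x\in\mathbb{N}_0^n$ if $x+\sum_{i=1}^{k-1}(y_i'-y_i)\ge y_k$ (componentwise) for all $k$. A state $x$ leads to $x'$ via $\mathcal R$ if there is an ordered sequence of $m\ge0$ reactions of $\mathcal R$ (repetitions allowed) active on $x$ with $x'=x+\sum_{i=1}^m(y_i'-y_i)$. $\mathcal R(x)$ denotes the set of states to which $x$ leads via $\mathcal R$. *)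

From mathcomp Require Import all_boot.
Set Implicit Arguments. Unset Strict Implicit. Unset Printing Implicit Defensive.

Definition state (n : nat) := {ffun 'I_n -> nat}.
Definition reaction (n : nat) := (state n * state n)%type.

Definition vzero n : state n := [ffun _ => 0].
Definition vadd n (x y : state n) : state n := [ffun i => x i + y i].
(* componentwise 0 \/ (x - y): truncated subtraction on nat *)
Definition vsub n (x y : state n) : state n := [ffun i => x i - y i].
Definition vle n (x y : state n) : Prop := forall i, x i <= y i.

Definition is_RN n (R : reaction n -> Prop) : Prop :=
  forall r, R r -> r.1 <> r.2.

Definition no_catalytic n (R : reaction n -> Prop) : Prop :=
  forall r, R r -> forall i : 'I_n, ~ (0 < r.1 i /\ 0 < r.2 i).

Definition oplus n (r1 r2 : reaction n) : reaction n :=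
  (vadd r1.1 (vsub r2.1 r1.2), vadd r2.2 (vsub r1.2 r2.1)).

Definition rzero n : reaction n := (vzero n, vzero n).

(* cl(A): all finite (+)-sums of elements of A, including the empty sum (0,0).
   By associativity the bracketing is irrelevant; we use right folding. *)
Definition cl n (A : reaction n -> Prop) : reaction n -> Prop :=
  fun r => exists s : seq (reaction n),
    (forall q, q \in s -> A q) /\ r = foldr (@oplus n) (rzero n) s.

(* An ordered sequence of reactions active on x: x + sum_{i<k}(y_i' - y_i) >= y_k
   for all k.  Since each intermediate state is >= the next reactant vector, the
   nat computation x - y + y' is exact. *)
Fixpoint active n (x : state n) (s : seq (reaction n)) : Prop :=
  match s with
  | [::] => True
  | r :: s' => vle r.1 x /\ active (vadd (vsub x r.1) r.2) s'
  end.

Fixpoint endpoint n (x : state n) (s : seq (reaction n)) : state n :=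
  match s with
  | [::] => x
  | r :: s' => endpoint (vadd (vsub x r.1) r.2) s'
  end.

Definition leads n (R : reaction n -> Prop) (x x' : state n) : Prop :=
  exists s : seq (reaction n),
    (forall q, q \in s -> R q) /\ active x s /\ x' = endpoint x s.

Definition reach n (R : reaction n -> Prop) (x : state n) : state n -> Prop :=
  leads R x.

(* The proof rests on one characterisation of reachability (lemma
   [leads_clP]): x leads to x' via R iff some element t = (y, y') of cl(R)
   satisfies y <= x and x' = x - y + y'.  It follows from the fact that a
   sequence of reactions s behaves exactly like its (+)-sum: s is active on x
   iff the reactant of the sum is <= x ([active_sumP]), and then s ends at
   x - y + y' ([endpoint_sum]).
   - If cl(R1) = cl(R2), the characterisation gives R1(x) = R2(x) directly.
   - Conversely, a reaction q = (y, y') of R1 leads y to y', hence some t of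
     cl(R2) moves y to y'; when q has no catalytic species, q is the only
     pair moving y to y' this way ([noncatalytic_transition_unique]), so
     q lies in cl(R2).  Thus R1 is contained in cl(R2), and so is cl(R1)
     because cl(R2) is closed under (+) ([cl_min]).  Catalysis-freeness is
     essential here. *)

From mathcomp Require Import all_boot.
From mathcomp Require Import zify.
Set Implicit Arguments.
Unset Strict Implicit.
Unset Printing Implicit Defensive.

Section ReactionAlgebra.
Variable n : nat.
Implicit Types (x : state n) (q r t : reaction n) (s : seq (reaction n)).
Implicit Types (R A B : reaction n -> Prop).

Definition fire x r : state n := vadd (vsub x r.1) r.2.

Definition rsum s : reaction n := foldr (@oplus n) (rzero n) s.

Lemma reaction_ext r t : r.1 = t.1 -> r.2 = t.2 -> r = t.
Proof. by case: r; case: t => /= ? ? ? ? -> ->. Qed.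

Lemma oplusA q r t : oplus (oplus q r) t = oplus q (oplus r t).
Proof.
by apply: reaction_ext; apply/ffunP => i; rewrite /oplus /= /vadd /vsub !ffunE; lia.
Qed.

Lemma oplus0r r : oplus (rzero n) r = r.
Proof.
by apply: reaction_ext; apply/ffunP => i;
  rewrite /oplus /rzero /vzero /= /vadd /vsub !ffunE; lia.
Qed.

Lemma rsum_cat s1 s2 : rsum (s1 ++ s2) = oplus (rsum s1) (rsum s2).
Proof. by elim: s1 => [|q s1 IH] /=; rewrite ?oplus0r // IH oplusA. Qed.

Lemma active_sumP s x : active x s <-> vle (rsum s).1 x.
Proof.
elim: s x => [|q s IH] x /=; first by split=> // _ i; rewrite ffunE.
rewrite IH /vle; split.
  by move=> [Hq Hs] i; move: (Hq i) (Hs i); rewrite /vadd /vsub !ffunE; lia.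
move=> H; split=> i; move: (H i); rewrite /vadd /vsub !ffunE; lia.
Qed.

Lemma endpoint_sum s x : active x s -> endpoint x s = fire x (rsum s).
Proof.
elim: s x => [|q s IH] x /=.
  by move=> _; apply/ffunP => i; rewrite /fire /rsum /= /vadd /vsub /vzero !ffunE; lia.
move=> [Hq /[dup] Hs /active_sumP Hsum]; rewrite IH //.
by apply/ffunP => i; move: (Hq i) (Hsum i); rewrite /fire /vadd /vsub !ffunE; lia.
Qed.

Lemma clP A r : cl A r <-> exists2 s, (forall q, q \in s -> A q) & r = rsum s.
Proof. by split=> [[s [HA ->]]|[s HA ->]]; exists s. Qed.

Lemma cl_oplus A r t : cl A r -> cl A t -> cl A (oplus r t).
Proof.
move=> /clP[s1 H1 ->] /clP[s2 H2 ->]; apply/clP; exists (s1 ++ s2).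
  by move=> q; rewrite mem_cat => /orP[/H1|/H2].
by rewrite rsum_cat.
Qed.

Lemma cl_min A B : (forall q, A q -> cl B q) -> forall r, cl A r -> cl B r.
Proof.
move=> AB r /clP[s HA ->]; elim: s HA => [|q s IH] HA /=; first by exists [::].
apply: cl_oplus; first by apply/AB/HA; rewrite inE eqxx.
by apply: IH => p ps; apply: HA; rewrite inE ps orbT.
Qed.

Lemma leads_clP R x x' :
  leads R x x' <-> exists2 t, cl R t & vle t.1 x /\ x' = fire x t.
Proof.
split.
  move=> [s [HR [Hact ->]]]; exists (rsum s); first by apply/clP; exists s.
  by split; [apply/active_sumP | apply: endpoint_sum].
move=> [t /clP[s HR ->] [Hle ->]].
have Hact : active x s by apply/active_sumP.
by exists s; split; last split; rewrite ?endpoint_sum.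
Qed.

Lemma leads_reaction R r : R r -> leads R r.1 r.2.
Proof.
move=> Rr; exists [:: r]; split; first by move=> q; rewrite inE => /eqP ->.
split; first by split=> // i.
by apply/ffunP => i; rewrite /= /vadd /vsub !ffunE; lia.
Qed.

(* Without catalytic species, q = (y, y') is the only pair t with t.1 <= y
   and y - t.1 + t.2 = y': in each species either y or y' vanishes, which
   pins down both components of t. *)
Lemma noncatalytic_transition_unique q t :
  (forall i, ~ (0 < q.1 i /\ 0 < q.2 i)) ->
  vle t.1 q.1 -> q.2 = fire q.1 t -> t = q.
Proof.
move=> nocat Hle Hfire.
have Hi i : q.2 i = q.1 i - t.1 i + t.2 i.
  by rewrite Hfire /fire /vadd /vsub !ffunE.
have E1 i : t.1 i = q.1 i by move: (nocat i) (Hle i) (Hi i); lia.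
apply: reaction_ext; apply/ffunP => i; first exact: E1.
by rewrite Hi E1 subnn.
Qed.

Lemma leads_of_cl_sub A B : (forall r, cl A r -> cl B r) ->
  forall x x', leads A x x' -> leads B x x'.
Proof. by move=> AB x x' /leads_clP[t /AB Bt Ht]; apply/leads_clP; exists t. Qed.

Lemma cl_of_leads_sub A B : no_catalytic A ->
  (forall x x', leads A x x' -> leads B x x') -> forall r, cl A r -> cl B r.
Proof.
move=> nocatA AB; apply: cl_min => q Aq.
have /AB/leads_clP[t Bt [Hle Hfire]] := leads_reaction Aq.
by rewrite -(noncatalytic_transition_unique (nocatA q Aq) Hle Hfire).
Qed.

End ReactionAlgebra.

Theorem theorem3p5 (n : nat) (R1 R2 : reaction n -> Prop) :
  is_RN R1 -> is_RN R2 -> no_catalytic R1 -> no_catalytic R2 ->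
  ((forall r, cl R1 r <-> cl R2 r) <->
   (forall x : state n, forall x', reach R1 x x' <-> reach R2 x x')).
Proof.
move=> _ _ nocat1 nocat2; split=> [Hcl x x' | Hreach r].
  by split; apply: leads_of_cl_sub => r /Hcl.
by split; apply: cl_of_leads_sub => // x x' /Hreach.
Qed.
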